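(* Let $\mathbb{K}\in\{\mathbb{R},\mathbb{C}\}$, let $X$ be a linear space over $\mathbb{K}$, let $\phi\colon X\times X\to\mathbb{K}$ be biadditive and let $f\colon X\to\mathbb{K}$ satisfy $$f(x+y)=f(x)f(y)-\phi(x,y)\quad\text{for all }x,y\in X.$$ Assume there exists $z_0\in X$ with $\phi(z_0,z_0)\neq 0$. Then there exists a constant $a\in\mathbb{K}\setminus\{0\}$ such that $$f(x)=a\,\phi(x,z_0)+1\quad\text{for all }x\in X,$$ and moreover $$a^2\phi(x,z_0)^2=\phi(x,x)\quad\text{for all }x\in X.$$
   Context: A map $\phi\colon X\times X\to\mathbb{K}$ is biadditive if $\phi(x+x',y)=\phi(x,y)+\phi(x',y)$ and $\phi(x,y+y')=\phi(x,y)+\phi(x,y')$ for all $x,x',y,y'\in X$ (no homogeneity is assumed). $f$ is an arbitrary function (no regularity assumed). *)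

From HB Require Import structures.
From mathcomp Require Import all_boot all_order all_algebra.
From mathcomp Require Import reals.
From mathcomp Require Import complex.
Set Implicit Arguments. Unset Strict Implicit. Unset Printing Implicit Defensive.
Import Order.TTheory GRing.Theory Num.Theory.
Local Open Scope ring_scope.

Definition biadditive (V : zmodType) (K : zmodType) (phi : V -> V -> K) :=
  (forall x x' y, phi (x + x') y = phi x y + phi x' y) /\
  (forall x y y', phi x (y + y') = phi x y + phi x y').

Definition thm_statement (K : fieldType) : Prop :=
  forall (X : lmodType K) (phi : X -> X -> K) (f : X -> K),
    biadditive phi ->
    (forall x y : X, f (x + y) = f x * f y - phi x y) ->
    forall z0 : X, phi z0 z0 != 0 ->
    exists2 a : K, a != 0 &
      (forall x : X, f x = a * phi x z0 + 1) /\
      (forall x : X, a ^+ 2 * (phi x z0) ^+ 2 = phi x x).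

From HB Require Import structures.
From mathcomp Require Import all_boot all_order all_algebra.
From mathcomp Require Import reals.
From mathcomp Require Import complex.
From mathcomp Require Import ring.
Local Open Scope ring_scope.
Import GRing.Theory.

(* Expanding f((x + y) + z) = f(x + (y + z)) with biadditivity gives
   phi(x,y) (f z - 1) = phi(y,z) (f x - 1).  Taking y = z = z0 shows that f - 1
   is a multiple a of phi(., z0); plugging this back into the functional
   equation factors phi(x,y) = a^2 phi(x,z0) phi(y,z0), and phi(z0,z0) != 0
   forces a != 0. *)

Section BiadditiveFunctionalEquation.

Variables (K : fieldType) (X : zmodType) (phi : X -> X -> K) (f : X -> K).
Hypothesis phi_biadd : biadditive phi.
Hypothesis f_eq : forall x y, f (x + y) = f x * f y - phi x y.

Lemma phi_mul_f_sub1 x y z : phi x y * (f z - 1) = phi y z * (f x - 1).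
Proof.
have [phiDl phiDr] := phi_biadd.
have assoc := f_eq (x + y) z.
rewrite -addrA !f_eq phiDl phiDr in assoc.
apply/eqP; rewrite -subr_eq0; apply/eqP.
transitivity (f x * (f y * f z - phi y z) - (phi x y + phi x z)
              - ((f x * f y - phi x y) * f z - (phi x z + phi y z))); first ring.
by rewrite assoc subrr.
Qed.

Variable z0 : X.
Hypothesis phi_z0 : phi z0 z0 != 0.

Let a := (f z0 - 1) / phi z0 z0.

Lemma f_affine_phi x : f x = a * phi x z0 + 1.
Proof.
by rewrite /a mulrAC [(f z0 - 1) * _]mulrC phi_mul_f_sub1 mulrC mulKf // subrK.
Qed.

Lemma phi_factor x y : phi x y = a ^+ 2 * phi x z0 * phi y z0.
Proof.
have [phiDl _] := phi_biadd.
have := f_eq x y; rewrite !f_affine_phi phiDl => fxy.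
have -> : phi x y = (a * phi x z0 + 1) * (a * phi y z0 + 1)
                    - (a * (phi x z0 + phi y z0) + 1) by rewrite fxy; ring.
ring.
Qed.

Lemma biadditive_exp_solution :
  exists2 a : K, a != 0 &
    (forall x, f x = a * phi x z0 + 1) /\
    (forall x, a ^+ 2 * phi x z0 ^+ 2 = phi x x).
Proof.
exists a; last by split=> [|x]; [exact: f_affine_phi | rewrite (phi_factor x x); ring].
apply: contra phi_z0 => /eqP a0.
by rewrite (phi_factor z0 z0) a0 expr2 !mul0r.
Qed.

End BiadditiveFunctionalEquation.

Lemma thm_statement_field (K : fieldType) : thm_statement K.
Proof. by move=> X phi f phi_biadd f_eq z0; apply: biadditive_exp_solution. Qed.

Theorem theorem1 (R : realType) :
  thm_statement R /\ thm_statement R[i].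
Proof. by split; apply: thm_statement_field. Qed.
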